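(* Let $T>0$, $L>0$, $V_{\max}>0$, $m_a>0$ and $\alpha_1>0$, and set $\alpha_2=0$. Call a continuous function $v:[0,T]\to\mathbb{R}$ admissible if $v(0)=0$, $0\le v(t)\le V_{\max}$ for all $t\in[0,T]$, $\int_0^T v(\tau)\,\mathrm{d}\tau\le L$, and $v$ is not identically zero. For admissible $v$, let $x(t)=\int_0^t v(\tau)\,\mathrm{d}\tau$, $$\mathcal{V}(v)=\frac{1}{T}\int_0^T\left[x(t)-\frac{1}{T}\int_0^T x(\tau)\,\mathrm{d}\tau\right]^2\mathrm{d}t,\qquad \mathcal{E}(v)=\frac{1}{2}m_a v^2(T)+\int_0^T\left(\alpha_1 v^2(t)+\alpha_2 v^3(t)\right)\mathrm{d}t,$$ and define the sensing energy efficiency $\mathcal{V}(v)/\mathcal{E}(v)$. Then the profile $$v^*(t)=\min\!\left(V_{\max},\frac{\pi L}{2T}\right)\sin\!\left(\frac{\pi t}{T}\right)$$ is admissible and maximizes $\mathcal{V}(v)/\mathcal{E}(v)$ over all admissible $v$; moreover, among all admissible profiles that maximize $\mathcal{V}(v)/\mathcal{E}(v)$, $v^*$ attains the largest value of $\mathcal{V}(v)$.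
   Context: Physical interpretation: a single movable antenna of mass $m_a$ moves along a linear track of length $L$ during a sensing interval $[0,T]$ with velocity profile $v(t)$; $\mathcal{V}(v)$ is the spatial variance of its trajectory (inversely proportional to the Cramér–Rao bound of direction-of-arrival estimation), $\mathcal{E}(v)$ is the mechanical energy consumed, with $\alpha_1$ the linear damping coefficient and $\alpha_2$ the quadratic aerodynamic drag coefficient (here $\alpha_2=0$, the linear-damping-dominated regime). *)

From Stdlib Require Import Reals.
From Coquelicot Require Import Coquelicot.
Open Scope R_scope.

Definition I0T (T : R) (t : R) : Prop := 0 <= t <= T.

Definition cont_on_0T (T : R) (v : R -> R) : Prop :=
  forall t, I0T T t -> filterlim v (within (I0T T) (locally t)) (locally (v t)).

Definition admissible (T L Vmax : R) (v : R -> R) : Prop :=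
  cont_on_0T T v /\
  v 0 = 0 /\
  (forall t, I0T T t -> 0 <= v t <= Vmax) /\
  RInt v 0 T <= L /\
  (exists t, I0T T t /\ v t <> 0).

Definition pos (v : R -> R) (t : R) : R := RInt v 0 t.

Definition SpVar (T : R) (v : R -> R) : R :=
  / T * RInt (fun t => (pos v t - / T * RInt (pos v) 0 T) ^ 2) 0 T.

Definition Energy (T ma a1 a2 : R) (v : R -> R) : R :=
  / 2 * ma * (v T) ^ 2 + RInt (fun t => a1 * (v t) ^ 2 + a2 * (v t) ^ 3) 0 T.

Definition SEE (T ma a1 : R) (v : R -> R) : R :=
  SpVar T v / Energy T ma a1 0 v.

Definition vstar (T L Vmax : R) (t : R) : R :=
  Rmin Vmax (PI * L / (2 * T)) * sin (PI * t / T).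

From Pilot Require Import Defs.
From Stdlib Require Import Reals Lra.
From Coquelicot Require Import Coquelicot.
Open Scope R_scope.

(* With [y = x - mean x], the spatial variance is [(1/T) int y^2], while for [alpha2 = 0] the
   energy is at least [alpha1 int v^2 = alpha1 int y'^2].  Wirtinger's inequality for the
   mean-zero [y], [(PI/T)^2 int y^2 <= int y'^2], bounds the efficiency by [T / (PI^2 alpha1)],
   and equality forces equality in Wirtinger's inequality, i.e. [v = k sin (PI t / T)].  Such
   profiles attain the bound, and their variance [k^2 T^2 / (2 PI^2)] grows with the amplitude
   [k], which admissibility caps at [min(Vmax, PI L / (2 T))].  Wirtinger's inequality itself
   comes from its Dirichlet form for [z = int y], proved with the Riccati solution
   [c = b cot (b t + d)]; its equality case from the harmonic oscillator [z'' = -(PI/T)^2 z]. *)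

Lemma continuous_Rconst (c x : R) : continuous (fun _ : R => c) x.
Proof. apply continuous_const. Qed.

Lemma continuous_Rid (x : R) : continuous (fun t : R => t) x.
Proof. apply continuous_id. Qed.

Lemma continuous_Rplus (f g : R -> R) (x : R) :
  continuous f x -> continuous g x -> continuous (fun t => f t + g t) x.
Proof. apply (continuous_plus f g). Qed.

Lemma continuous_Rmult (f g : R -> R) (x : R) :
  continuous f x -> continuous g x -> continuous (fun t => f t * g t) x.
Proof. apply (continuous_mult f g). Qed.

Lemma continuous_Rminus (f g : R -> R) (x : R) :
  continuous f x -> continuous g x -> continuous (fun t => f t - g t) x.
Proof. apply (continuous_minus f g). Qed.

Lemma continuous_Ropp (f : R -> R) (x : R) :
  continuous f x -> continuous (fun t => - f t) x.
Proof. apply (continuous_opp f). Qed.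

Lemma continuous_Rsqr (f : R -> R) (x : R) :
  continuous f x -> continuous (fun t => f t ^ 2) x.
Proof.
  intros Hf. apply (continuous_ext (fun t => f t * f t)); [intros; simpl; ring|].
  now apply continuous_Rmult.
Qed.

Lemma continuous_of_is_derive (f : R -> R) (x l : R) :
  is_derive f x l -> continuous f x.
Proof. intros Hf. apply (ex_derive_continuous (K := R_AbsRing) (V := R_NormedModule)). now exists l. Qed.

Lemma is_derive_Rmult (f g : R -> R) (x df dg : R) :
  is_derive f x df -> is_derive g x dg ->
  is_derive (fun t => f t * g t) x (df * g x + f x * dg).
Proof.
  intros Hf Hg. apply (is_derive_mult f g x df dg Hf Hg). intros; apply Rmult_comm.
Qed.

Ltac continuity_R :=
  repeat match goal with
  | H : forall t, continuous ?f t |- continuous ?f _ => apply H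
  | H : forall t, continuous ?f t |- continuous (fun t => ?f t) _ => apply H
  | H : continuous ?f ?x |- continuous ?f ?x => exact H
  | H : continuous ?f ?x |- continuous (fun t => ?f t) ?x => exact H
  | |- continuous (fun _ => _) _ => apply continuous_Rconst
  | |- continuous (fun t => t) _ => apply continuous_Rid
  | |- continuous (fun t => @?f t ^ 2) _ => apply (continuous_Rsqr f)
  | |- continuous (fun t => @?f t - @?g t) _ => apply (continuous_Rminus f g)
  | |- continuous (fun t => @?f t + @?g t) _ => apply (continuous_Rplus f g)
  | |- continuous (fun t => @?f t * @?g t) _ => apply (continuous_Rmult f g)
  | |- continuous (fun t => - @?f t) _ => apply (continuous_Ropp f)
  | |- continuous (fun t => sin (@?f t)) _ => apply (continuous_sin_comp f)
  | |- continuous (fun t => cos (@?f t)) _ => apply (continuous_cos_comp f)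
  end.

Lemma ex_RInt_of_continuous (f : R -> R) (a b : R) :
  (forall t, continuous f t) -> ex_RInt f a b.
Proof. intros Hf. apply (ex_RInt_continuous (V := R_CompleteNormedModule)); auto. Qed.

Lemma RInt_Rplus (f g : R -> R) (a b : R) : ex_RInt f a b -> ex_RInt g a b ->
  RInt (fun t => f t + g t) a b = RInt f a b + RInt g a b.
Proof. apply (RInt_plus f g). Qed.

Lemma RInt_Rminus (f g : R -> R) (a b : R) : ex_RInt f a b -> ex_RInt g a b ->
  RInt (fun t => f t - g t) a b = RInt f a b - RInt g a b.
Proof. apply (RInt_minus f g). Qed.

Lemma RInt_Rscal (f : R -> R) (a b c : R) : ex_RInt f a b ->
  RInt (fun t => c * f t) a b = c * RInt f a b.
Proof. apply (RInt_scal f). Qed.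

Lemma RInt_ext_le (f g : R -> R) (a b : R) :
  a <= b -> (forall t, a <= t <= b -> f t = g t) -> RInt f a b = RInt g a b.
Proof.
  intros Hab Hfg. apply RInt_ext. rewrite Rmin_left, Rmax_right by lra.
  intros t Ht. apply Hfg. lra.
Qed.

Lemma RInt_of_is_derive (F f : R -> R) (a b : R) :
  (forall t, is_derive F t (f t)) -> (forall t, continuous f t) ->
  RInt f a b = F b - F a.
Proof. intros HF Hf. apply is_RInt_unique, (is_RInt_derive F f); auto. Qed.

Lemma RInt_sq_ge_0 (f : R -> R) (a b : R) :
  a <= b -> (forall t, continuous f t) -> 0 <= RInt (fun t => f t ^ 2) a b.
Proof.
  intros Hab Hf. apply RInt_ge_0; auto.
  - apply ex_RInt_of_continuous. intros; continuity_R.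
  - intros; apply pow2_ge_0.
Qed.

Lemma RInt_gt_0_of_point (g : R -> R) (a b t0 : R) :
  a < b -> (forall t, continuous g t) -> (forall t, a <= t <= b -> 0 <= g t) ->
  a <= t0 <= b -> 0 < g t0 -> 0 < RInt g a b.
Proof.
  intros Hab Hc Hpos Ht0 Hg0.
  assert (Hnear : locally t0 (fun t => g t0 / 2 < g t)).
  { apply (Hc t0 (fun y => g t0 / 2 < y)).
    assert (He : 0 < g t0 / 2) by lra.
    exists (mkposreal _ He). intros y Hy. change (Rabs (y - g t0) < g t0 / 2) in Hy.
    apply Rabs_def2 in Hy. lra. }
  destruct Hnear as [[d Hd] Hnear]; simpl in Hnear.
  set (c1 := Rmax a (t0 - d / 2)). set (d1 := Rmin b (t0 + d / 2)).
  assert (Hc1 : a <= c1 /\ t0 - d / 2 <= c1) by (split; [apply Rmax_l | apply Rmax_r]).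
  assert (Hd1 : d1 <= b /\ d1 <= t0 + d / 2) by (split; [apply Rmin_l | apply Rmin_r]).
  assert (Hcd : c1 < d1).
  { unfold c1, d1, Rmax, Rmin.
    destruct (Rle_dec a (t0 - d / 2)); destruct (Rle_dec b (t0 + d / 2)); lra. }
  assert (Hex : forall u v, ex_RInt g u v) by (intros; now apply ex_RInt_of_continuous).
  rewrite <- (RInt_Chasles g a c1 b), <- (RInt_Chasles g c1 d1 b) by auto.
  assert (0 <= RInt g a c1) by (apply RInt_ge_0; auto; [lra | intros; apply Hpos; lra]).
  assert (0 <= RInt g d1 b) by (apply RInt_ge_0; auto; [lra | intros; apply Hpos; lra]).
  assert (0 < RInt g c1 d1).
  { apply RInt_gt_0; auto. intros t Ht.
    enough (g t0 / 2 < g t) by lra.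
    apply Hnear. change (Rabs (t - t0) < d). apply Rabs_def1; lra. }
  unfold plus; simpl. lra.
Qed.

Lemma RInt_sq_le_of_riccati (z y c : R -> R) (b T : R) :
  0 <= T ->
  (forall t, is_derive z t (y t)) -> (forall t, continuous y t) ->
  (forall t, 0 <= t <= T -> is_derive c t (- (b ^ 2 + c t ^ 2))) ->
  z 0 = 0 -> z T = 0 ->
  b ^ 2 * RInt (fun t => z t ^ 2) 0 T <= RInt (fun t => y t ^ 2) 0 T.
Proof.
  intros HT Hz Hy Hc Hz0 HzT.
  assert (Hzc : forall t, continuous z t) by (intros t; eapply continuous_of_is_derive; eauto).
  assert (Hcc : forall t, 0 <= t <= T -> continuous c t)
    by (intros t Ht; eapply continuous_of_is_derive; eauto).
  set (dF := fun t => (y t * z t + z t * y t) * c t + z t * z t * - (b ^ 2 + c t ^ 2)).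
  assert (HdF : is_RInt dF 0 T (minus (z T * z T * c T) (z 0 * z 0 * c 0))).
  { apply (is_RInt_derive (fun t => z t * z t * c t)); rewrite Rmin_left, Rmax_right by lra.
    - intros t Ht. unfold dF.
      apply (is_derive_Rmult (fun t => z t * z t) c); [apply (is_derive_Rmult z z) | apply Hc]; auto.
    - intros t Ht. unfold dF. specialize (Hcc t Ht). continuity_R. }
  replace (minus _ _) with 0 in HdF
    by (rewrite Hz0, HzT; unfold minus, plus, opp; simpl; ring).
  assert (Hsq : 0 <= RInt (fun t => (y t - z t * c t) ^ 2) 0 T).
  { apply RInt_ge_0; auto.
    - apply (ex_RInt_continuous (V := R_CompleteNormedModule)).
      rewrite Rmin_left, Rmax_right by lra.
      intros t Ht. specialize (Hcc t Ht). continuity_R.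
    - intros; apply pow2_ge_0. }
  (* since [c' = -(b^2 + c^2)]: [(y - z c)^2 = y^2 - b^2 z^2 - (z^2 c)'] *)
  rewrite (RInt_ext_le _ (fun t => (y t ^ 2 - b ^ 2 * z t ^ 2) - dF t)) in Hsq
    by (auto; intros; unfold dF; ring).
  assert (Hex : forall f : R -> R, (forall t, continuous f t) -> ex_RInt f 0 T)
    by (intros; now apply ex_RInt_of_continuous).
  rewrite RInt_Rminus, RInt_Rminus, RInt_Rscal, (is_RInt_unique _ _ _ _ HdF) in Hsq;
    [lra | apply Hex; intros; continuity_R .. | now exists 0].
Qed.

Lemma is_derive_cot_riccati (b d t : R) :
  sin (b * t + d) <> 0 ->
  is_derive (fun t => b * cos (b * t + d) / sin (b * t + d)) t
    (- (b ^ 2 + (b * cos (b * t + d) / sin (b * t + d)) ^ 2)).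
Proof.
  intros Hs. auto_derive; auto.
  field_simplify; auto.
Qed.

Lemma Wirtinger_Dirichlet_lt (z y : R -> R) (b T : R) :
  0 < T -> 0 < b -> b * T < PI ->
  (forall t, is_derive z t (y t)) -> (forall t, continuous y t) ->
  z 0 = 0 -> z T = 0 ->
  b ^ 2 * RInt (fun t => z t ^ 2) 0 T <= RInt (fun t => y t ^ 2) 0 T.
Proof.
  intros HT Hb HbT Hz Hy Hz0 HzT.
  set (d := (PI - b * T) / 2).
  apply (RInt_sq_le_of_riccati z y (fun t => b * cos (b * t + d) / sin (b * t + d)));
    auto; [lra|].
  intros t Ht. apply is_derive_cot_riccati.
  enough (0 < sin (b * t + d)) by lra.
  apply sin_gt_0; unfold d; nra.
Qed.

Lemma Wirtinger_Dirichlet (z y : R -> R) (T : R) :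
  0 < T ->
  (forall t, is_derive z t (y t)) -> (forall t, continuous y t) ->
  z 0 = 0 -> z T = 0 ->
  (PI / T) ^ 2 * RInt (fun t => z t ^ 2) 0 T <= RInt (fun t => y t ^ 2) 0 T.
Proof.
  intros HT Hz Hy Hz0 HzT.
  assert (Hzc : forall t, continuous z t) by (intros t; eapply continuous_of_is_derive; eauto).
  set (Z := RInt (fun t => z t ^ 2) 0 T). set (Y := RInt (fun t => y t ^ 2) 0 T).
  assert (HZ : 0 <= Z) by (apply RInt_sq_ge_0; auto; lra).
  assert (HY : 0 <= Y) by (apply RInt_sq_ge_0; auto; lra).
  assert (Ha : 0 < PI / T) by (apply Rdiv_lt_0_compat; [apply PI_RGT_0 | lra]).
  destruct (Rle_or_lt ((PI / T) ^ 2 * Z) Y) as [|Hlt]; auto.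
  (* otherwise any [b] with [b^2 Z] strictly between [Y] and [(PI/T)^2 Z] contradicts
     [Wirtinger_Dirichlet_lt] *)
  exfalso.
  assert (HZp : 0 < Z) by (destruct HZ as [|HZ0]; auto; rewrite <- HZ0 in Hlt; lra).
  assert (HYZ : 0 <= Y / Z < (PI / T) ^ 2).
  { split; [now apply Rdiv_le_0_compat|].
    apply (Rmult_lt_reg_r Z); auto. unfold Rdiv. rewrite Rmult_assoc, Rinv_l; lra. }
  set (b := sqrt ((Y / Z + (PI / T) ^ 2) / 2)).
  assert (Hb2 : b ^ 2 = (Y / Z + (PI / T) ^ 2) / 2) by (unfold b; rewrite pow2_sqrt; lra).
  assert (Hb : 0 < b) by (apply sqrt_lt_R0; lra).
  assert (HbT : b * T < PI).
  { enough (b < PI / T) by (apply (Rmult_lt_compat_r T) in H; auto;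
      unfold Rdiv in H; rewrite Rmult_assoc, Rinv_l in H; lra).
    nra. }
  assert (Hle := Wirtinger_Dirichlet_lt z y b T HT Hb HbT Hz Hy Hz0 HzT). fold Z Y in Hle.
  assert (b ^ 2 * Z = (Y + (PI / T) ^ 2 * Z) / 2) by (rewrite Hb2; field; lra).
  lra.
Qed.

Lemma const_of_is_derive_0 (f df : R -> R) (a b : R) :
  (forall t, is_derive f t (df t)) -> (forall t, a <= t <= b -> df t = 0) ->
  forall t, a <= t <= b -> f t = f a.
Proof.
  intros Hf Hdf t Ht.
  destruct (MVT_gen f a t df) as [c [Hc Hfc]]; auto.
  - intros s _. apply continuity_pt_filterlim. eapply continuous_of_is_derive; eauto.
  - rewrite Rmin_left, Rmax_right in Hc by lra. rewrite Hdf in Hfc by lra. lra.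
Qed.

Lemma harmonic_oscillator_solution (z y w : R -> R) (a T : R) :
  (forall t, is_derive z t (y t)) -> (forall t, is_derive y t (w t)) -> z 0 = 0 ->
  (forall t, 0 <= t <= T -> w t = - a ^ 2 * z t) ->
  forall t, 0 <= t <= T -> a * z t = y 0 * sin (a * t).
Proof.
  intros Hz Hy Hz0 Hw.
  (* [P] and [Q] are first integrals of [z'' = - a^2 z]. *)
  set (P := fun t => y t * sin (a * t) - a * z t * cos (a * t)).
  set (Q := fun t => y t * cos (a * t) + a * z t * sin (a * t)).
  assert (HP : forall t, is_derive P t ((w t + a ^ 2 * z t) * sin (a * t))).
  { intros t. unfold P. auto_derive.
    - repeat split; [exists (w t) | exists (y t)]; auto.
    - rewrite (is_derive_unique (fun s : R => y s) t (w t)), (is_derive_unique (fun s : R => z s) t (y t))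
        by auto.
      ring. }
  assert (HQ : forall t, is_derive Q t ((w t + a ^ 2 * z t) * cos (a * t))).
  { intros t. unfold Q. auto_derive.
    - repeat split; [exists (w t) | exists (y t)]; auto.
    - rewrite (is_derive_unique (fun s : R => y s) t (w t)), (is_derive_unique (fun s : R => z s) t (y t))
        by auto.
      ring. }
  assert (Hcst : forall t, 0 <= t <= T -> P t = P 0 /\ Q t = Q 0).
  { intros t Ht. split; [apply (const_of_is_derive_0 P _ 0 T HP) | apply (const_of_is_derive_0 Q _ 0 T HQ)];
      auto; intros s Hs; rewrite Hw by auto; ring. }
  intros t Ht. destruct (Hcst t Ht) as [HPt HQt].
  assert (Hsc := sin2_cos2 (a * t)). unfold Rsqr in Hsc.
  assert (HQP : a * z t = Q t * sin (a * t) - P t * cos (a * t)).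
  { transitivity (a * z t * (sin (a * t) * sin (a * t) + cos (a * t) * cos (a * t))).
    - rewrite Hsc; ring.
    - unfold P, Q; ring. }
  rewrite HQP, HPt, HQt. unfold P, Q. rewrite Hz0, Rmult_0_r, sin_0, cos_0. ring.
Qed.

Definition mean_pos (T : R) (v : R -> R) : R := / T * RInt (Defs.pos v) 0 T.

Definition dev (T : R) (v : R -> R) (t : R) : R := Defs.pos v t - mean_pos T v.

Definition dev_prim (T : R) (v : R -> R) (t : R) : R := RInt (dev T v) 0 t.

Lemma SpVar_dev (T : R) (v : R -> R) :
  SpVar T v = / T * RInt (fun t => dev T v t ^ 2) 0 T.
Proof. reflexivity. Qed.

Lemma dev_prim_0 (T : R) (v : R -> R) : dev_prim T v 0 = 0.
Proof. apply (RInt_point (V := R_CompleteNormedModule)). Qed.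

(* Expanding the square of this remainder and integrating [dev_prim * w] by parts reduces
   Wirtinger's inequality for the mean-zero [dev] to its Dirichlet form for [dev_prim]. *)
Definition Wirtinger_remainder (T : R) (w : R -> R) (t : R) : R :=
  PI / T * dev_prim T w t + w t / (PI / T).

Section Deviation.

Variables (T : R) (w : R -> R).
Hypothesis HT : 0 < T.
Hypothesis Hw : forall t, continuous w t.

Lemma is_derive_pos (t : R) : is_derive (Defs.pos w) t (w t).
Proof.
  apply (is_derive_RInt w (Defs.pos w) 0 t); auto.
  apply filter_forall. intros s.
  apply (RInt_correct (V := R_CompleteNormedModule)), ex_RInt_of_continuous, Hw.
Qed.

Lemma is_derive_dev (t : R) : is_derive (dev T w) t (w t).
Proof.
  unfold dev. replace (w t) with (w t - 0) by ring.
  apply (is_derive_minus (Defs.pos w) (fun _ => mean_pos T w)).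
  - apply is_derive_pos.
  - apply (is_derive_const (K := R_AbsRing) (V := R_NormedModule)).
Qed.

Lemma continuous_dev (t : R) : continuous (dev T w) t.
Proof. eapply continuous_of_is_derive, is_derive_dev. Qed.

Lemma is_derive_dev_prim (t : R) : is_derive (dev_prim T w) t (dev T w t).
Proof.
  apply (is_derive_RInt (dev T w) (dev_prim T w) 0 t); [|apply continuous_dev].
  apply filter_forall. intros s.
  apply (RInt_correct (V := R_CompleteNormedModule)), ex_RInt_of_continuous, continuous_dev.
Qed.

Lemma continuous_dev_prim (t : R) : continuous (dev_prim T w) t.
Proof. eapply continuous_of_is_derive, is_derive_dev_prim. Qed.

Lemma dev_prim_T : dev_prim T w T = 0.
Proof.
  unfold dev_prim, dev, mean_pos.
  rewrite RInt_Rminus, RInt_const.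
  - unfold scal; simpl; unfold mult; simpl. field. lra.
  - apply ex_RInt_of_continuous. intros t. eapply continuous_of_is_derive, is_derive_pos.
  - apply ex_RInt_const.
Qed.

Lemma RInt_dev_sq_by_parts :
  RInt (fun t => dev T w t ^ 2) 0 T = - RInt (fun t => dev_prim T w t * w t) 0 T.
Proof.
  assert (Hc1 := continuous_dev). assert (Hc2 := continuous_dev_prim).
  enough (H : RInt (fun t => dev T w t ^ 2 + dev_prim T w t * w t) 0 T = 0).
  { rewrite RInt_Rplus in H; [lra | apply ex_RInt_of_continuous; intros; continuity_R ..]. }
  rewrite (RInt_of_is_derive (fun t => dev_prim T w t * dev T w t)).
  - rewrite dev_prim_0, dev_prim_T. cbn. ring.
  - intros t. replace (_ + _) with (dev T w t * dev T w t + dev_prim T w t * w t) by ring.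
    apply (is_derive_Rmult (dev_prim T w) (dev T w)); [apply is_derive_dev_prim | apply is_derive_dev].
  - intros t. continuity_R.
Qed.

Lemma continuous_Wirtinger_remainder (t : R) : continuous (Wirtinger_remainder T w) t.
Proof.
  assert (Hc := continuous_dev_prim). unfold Wirtinger_remainder, Rdiv. continuity_R.
Qed.

Lemma RInt_Wirtinger_remainder_sq_le :
  RInt (fun t => Wirtinger_remainder T w t ^ 2) 0 T
  <= RInt (fun t => w t ^ 2) 0 T / (PI / T) ^ 2 - RInt (fun t => dev T w t ^ 2) 0 T.
Proof.
  assert (HPI := PI_RGT_0). assert (Hc := continuous_dev_prim).
  assert (HD : (PI / T) ^ 2 * RInt (fun t => dev_prim T w t ^ 2) 0 T
               <= RInt (fun t => dev T w t ^ 2) 0 T).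
  { apply Wirtinger_Dirichlet; auto.
    - apply is_derive_dev_prim.
    - apply continuous_dev.
    - apply dev_prim_0.
    - apply dev_prim_T. }
  rewrite (RInt_ext_le _ (fun t => ((PI / T) ^ 2 * dev_prim T w t ^ 2 + 2 * (dev_prim T w t * w t))
                                   + / (PI / T) ^ 2 * w t ^ 2))
    by (lra || (intros; unfold Wirtinger_remainder; field; split; lra)).
  rewrite !RInt_Rplus, !RInt_Rscal; try (apply ex_RInt_of_continuous; intros; continuity_R).
  rewrite RInt_dev_sq_by_parts in HD |- *. unfold Rdiv. lra.
Qed.

Lemma Wirtinger_mean_zero :
  (PI / T) ^ 2 * RInt (fun t => dev T w t ^ 2) 0 T <= RInt (fun t => w t ^ 2) 0 T.
Proof.
  assert (Ha : 0 < PI / T) by (apply Rdiv_lt_0_compat; [apply PI_RGT_0 | lra]).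
  assert (Hsq := RInt_sq_ge_0 _ 0 T ltac:(lra) continuous_Wirtinger_remainder).
  assert (Hle := RInt_Wirtinger_remainder_sq_le).
  rewrite Rmult_comm. apply Rle_div_r; [nra | lra].
Qed.

Lemma Wirtinger_mean_zero_eq :
  (PI / T) ^ 2 * RInt (fun t => dev T w t ^ 2) 0 T = RInt (fun t => w t ^ 2) 0 T ->
  forall t, 0 <= t <= T -> w t = - (PI / T) ^ 2 * dev_prim T w t.
Proof.
  intros Heq t Ht.
  assert (HPI := PI_RGT_0).
  assert (Hsq : RInt (fun t => Wirtinger_remainder T w t ^ 2) 0 T <= 0).
  { assert (Hle := RInt_Wirtinger_remainder_sq_le).
    rewrite <- Heq, Rmult_div_r in Hle by (apply pow_nonzero, Rgt_not_eq, Rdiv_lt_0_compat; lra).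
    lra. }
  destruct (Req_dec (Wirtinger_remainder T w t) 0) as [Hr | Hr].
  - unfold Wirtinger_remainder in Hr. apply (f_equal (Rmult (PI / T))) in Hr.
    replace (PI / T * (PI / T * dev_prim T w t + w t / (PI / T)))
      with ((PI / T) ^ 2 * dev_prim T w t + w t) in Hr by (field; split; lra).
    lra.
  - enough (0 < RInt (fun t => Wirtinger_remainder T w t ^ 2) 0 T) by lra.
    apply (RInt_gt_0_of_point _ 0 T t); auto.
    + intros. assert (Hc := continuous_Wirtinger_remainder). continuity_R.
    + intros; apply pow2_ge_0.
    + now apply pow2_gt_0.
Qed.

Lemma Wirtinger_mean_zero_eq_sin :
  (PI / T) ^ 2 * RInt (fun t => dev T w t ^ 2) 0 T = RInt (fun t => w t ^ 2) 0 T ->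
  exists k, forall t, 0 <= t <= T -> w t = k * sin (PI / T * t).
Proof.
  intros Heq. exists (- (PI / T) * dev T w 0). intros t Ht.
  assert (Hsol := harmonic_oscillator_solution (dev_prim T w) (dev T w) w (PI / T) T
                    is_derive_dev_prim is_derive_dev (dev_prim_0 T w)
                    (Wirtinger_mean_zero_eq Heq) t Ht).
  rewrite (Wirtinger_mean_zero_eq Heq t Ht).
  replace (- (PI / T) ^ 2 * dev_prim T w t) with (- (PI / T) * (PI / T * dev_prim T w t)) by ring.
  rewrite Hsol. ring.
Qed.

End Deviation.

Lemma sin_PI_div_bounds (T t : R) : 0 < T -> 0 <= t <= T -> 0 <= sin (PI / T * t) <= 1.
Proof.
  intros HT Ht. assert (HPI := PI_RGT_0). split; [|apply SIN_bound].
  apply sin_ge_0.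
  - apply Rmult_le_pos; [apply Rlt_le, Rdiv_lt_0_compat|]; lra.
  - replace PI with (PI / T * T) at 2 by (field; lra).
    apply Rmult_le_compat_l; [apply Rlt_le, Rdiv_lt_0_compat|]; lra.
Qed.

Lemma sin_PI_div_half (T : R) : 0 < T -> sin (PI / T * (T / 2)) = 1.
Proof. intros HT. replace (PI / T * (T / 2)) with (PI / 2) by (field; lra). apply sin_PI2. Qed.

Definition SEE_max (T a1 : R) : R := T / (PI ^ 2 * a1).

Section SineProfile.

Variables (T k : R) (v : R -> R).
Hypothesis HT : 0 < T.
Hypothesis Hv : forall t, 0 <= t <= T -> v t = k * sin (PI / T * t).

Let HPI := PI_RGT_0.

Let PI_div_mul : PI / T * T = PI.
Proof. field. lra. Qed.

Lemma sin_profile_T : v T = 0.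
Proof. rewrite Hv by lra. rewrite PI_div_mul. rewrite sin_PI. ring. Qed.

Lemma RInt_sin_profile : RInt v 0 T = 2 * k * T / PI.
Proof.
  rewrite (RInt_ext_le _ (fun t => k * sin (PI / T * t))) by (auto; lra).
  rewrite (RInt_of_is_derive (fun t => - k * T / PI * cos (PI / T * t))).
  - rewrite PI_div_mul. rewrite Rmult_0_r, cos_PI, cos_0. cbn. field. lra.
  - intros t. auto_derive; auto. field. split; lra.
  - intros t. continuity_R.
Qed.

Lemma RInt_sin_profile_sq (c : R) : RInt (fun t => c * v t ^ 2) 0 T = c * k ^ 2 * T / 2.
Proof.
  rewrite (RInt_ext_le _ (fun t => c * k ^ 2 * sin (PI / T * t) ^ 2))
    by (lra || (intros; rewrite Hv by lra; ring)).
  rewrite (RInt_of_is_derive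
             (fun t => c * k ^ 2 / 2 * (t - T / PI * sin (PI / T * t) * cos (PI / T * t)))).
  - rewrite PI_div_mul. rewrite Rmult_0_r, sin_PI, sin_0. cbn. field. lra.
  - intros t. auto_derive; auto.
    assert (Hcos2 : cos (PI / T * t) ^ 2 = 1 - sin (PI / T * t) ^ 2)
      by (rewrite <- (sin2_cos2 (PI / T * t)); unfold Rsqr; ring).
    field_simplify; [rewrite Hcos2; field | split; lra].
  - intros t. continuity_R.
Qed.

Lemma pos_sin_profile (t : R) :
  0 <= t <= T -> Defs.pos v t = k * T / PI * (1 - cos (PI / T * t)).
Proof.
  intros Ht. unfold Defs.pos.
  rewrite (RInt_ext_le _ (fun s => k * sin (PI / T * s))) by (lra || (intros; apply Hv; lra)).
  rewrite (RInt_of_is_derive (fun s => - k * T / PI * cos (PI / T * s))).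
  - rewrite Rmult_0_r, cos_0. cbn. field. lra.
  - intros s. auto_derive; auto. field. split; lra.
  - intros s. continuity_R.
Qed.

Lemma mean_pos_sin_profile : mean_pos T v = k * T / PI.
Proof.
  unfold mean_pos.
  rewrite (RInt_ext_le _ (fun t => k * T / PI * (1 - cos (PI / T * t))))
    by (lra || (intros; now apply pos_sin_profile)).
  rewrite (RInt_of_is_derive (fun t => k * T / PI * (t - T / PI * sin (PI / T * t)))).
  - rewrite PI_div_mul. rewrite Rmult_0_r, sin_PI, sin_0. field. lra.
  - intros t. auto_derive; auto. field. split; lra.
  - intros t. continuity_R.
Qed.

Lemma dev_sin_profile (t : R) : 0 <= t <= T -> dev T v t = - (k * T / PI) * cos (PI / T * t).
Proof. intros Ht. unfold dev. rewrite pos_sin_profile, mean_pos_sin_profile by auto. ring. Qed.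

Lemma SpVar_sin_profile : SpVar T v = k ^ 2 * T ^ 2 / (2 * PI ^ 2).
Proof.
  rewrite SpVar_dev.
  rewrite (RInt_ext_le _ (fun t => (k * T / PI) ^ 2 * cos (PI / T * t) ^ 2))
    by (lra || (intros; rewrite dev_sin_profile by auto; ring)).
  rewrite (RInt_of_is_derive
             (fun t => (k * T / PI) ^ 2 / 2 * (t + T / PI * sin (PI / T * t) * cos (PI / T * t)))).
  - rewrite PI_div_mul. rewrite Rmult_0_r, sin_PI, sin_0. field. lra.
  - intros t. auto_derive; auto.
    assert (Hsin2 : sin (PI / T * t) ^ 2 = 1 - cos (PI / T * t) ^ 2)
      by (rewrite <- (sin2_cos2 (PI / T * t)); unfold Rsqr; ring).
    field_simplify; [rewrite Hsin2; field; lra | lra | split; lra].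
  - intros t. continuity_R.
Qed.

Lemma Energy_sin_profile (ma a1 : R) : Energy T ma a1 0 v = a1 * k ^ 2 * T / 2.
Proof.
  unfold Energy. rewrite sin_profile_T.
  rewrite (RInt_ext_le _ (fun t => a1 * v t ^ 2)) by (lra || (intros; ring)).
  rewrite RInt_sin_profile_sq. ring.
Qed.

Lemma SEE_sin_profile (ma a1 : R) : 0 < a1 -> k <> 0 -> SEE T ma a1 v = SEE_max T a1.
Proof.
  intros Ha1 Hk. unfold SEE, SEE_max. rewrite SpVar_sin_profile, Energy_sin_profile.
  field. repeat split; lra.
Qed.

End SineProfile.

Lemma SEE_max_sub (T a1 Y E : R) :
  0 < T -> 0 < a1 -> 0 < E ->
  exists D, 0 < D /\ SEE_max T a1 - / T * Y / E = (E - a1 * ((PI / T) ^ 2 * Y)) / D.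
Proof.
  intros HT Ha1 HE. assert (HPI := PI_RGT_0).
  exists (T * (PI / T) ^ 2 * a1 * E). split.
  - assert (0 < (PI / T) ^ 2) by (apply pow_lt, Rdiv_lt_0_compat; lra).
    do 3 (apply Rmult_lt_0_compat; auto).
  - unfold SEE_max. field. repeat split; lra.
Qed.

Section EfficiencyBound.

Variables (T a1 Y W E : R).
Hypothesis HT : 0 < T.
Hypothesis Ha1 : 0 < a1.
Hypothesis HW : 0 < W.
Hypothesis HE : a1 * W <= E.
Hypothesis HYW : (PI / T) ^ 2 * Y <= W.

Let HaYW : a1 * ((PI / T) ^ 2 * Y) <= a1 * W.
Proof. apply Rmult_le_compat_l; lra. Qed.

Lemma efficiency_le_max : / T * Y / E <= SEE_max T a1.
Proof.
  destruct (SEE_max_sub T a1 Y E) as [D [HD Hgap]]; auto; [nra|].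
  enough (0 <= (E - a1 * ((PI / T) ^ 2 * Y)) / D) by lra.
  apply Rdiv_le_0_compat; lra.
Qed.

Lemma Wirtinger_eq_of_efficiency_max : / T * Y / E = SEE_max T a1 -> (PI / T) ^ 2 * Y = W.
Proof.
  intros Heq.
  destruct (SEE_max_sub T a1 Y E) as [D [HD Hgap]]; auto; [nra|].
  rewrite Heq, Rminus_diag in Hgap.
  assert (Hnum : E - a1 * ((PI / T) ^ 2 * Y) = 0).
  { apply (Rmult_eq_reg_r (/ D)); [|apply Rinv_neq_0_compat; lra]. lra. }
  apply (Rmult_eq_reg_l a1); lra.
Qed.

End EfficiencyBound.

Section Efficiency.

Variables (T ma a1 : R) (w : R -> R).
Hypothesis HT : 0 < T.
Hypothesis Hma : 0 <= ma.
Hypothesis Ha1 : 0 < a1.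
Hypothesis Hw : forall t, continuous w t.
Hypothesis Hw_nz : exists t0, 0 <= t0 <= T /\ w t0 <> 0.

Lemma Energy_lin_damping :
  Energy T ma a1 0 w = / 2 * ma * w T ^ 2 + a1 * RInt (fun t => w t ^ 2) 0 T.
Proof.
  unfold Energy. rewrite <- RInt_Rscal by (apply ex_RInt_of_continuous; intros; continuity_R).
  f_equal. apply RInt_ext_le; [lra | intros; ring].
Qed.

Lemma RInt_sq_pos : 0 < RInt (fun t => w t ^ 2) 0 T.
Proof.
  destruct Hw_nz as [t0 [Ht0 Hwt0]].
  apply (RInt_gt_0_of_point _ 0 T t0); auto.
  - intros; continuity_R.
  - intros; apply pow2_ge_0.
  - now apply pow2_gt_0.
Qed.

Lemma Energy_ge_damping : a1 * RInt (fun t => w t ^ 2) 0 T <= Energy T ma a1 0 w.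
Proof.
  rewrite Energy_lin_damping.
  assert (0 <= / 2 * ma * w T ^ 2) by (apply Rmult_le_pos; [lra | apply pow2_ge_0]).
  lra.
Qed.

Lemma SEE_le_max_of_continuous : SEE T ma a1 w <= SEE_max T a1.
Proof.
  unfold SEE. rewrite SpVar_dev.
  apply efficiency_le_max with (RInt (fun t => w t ^ 2) 0 T); auto.
  - apply RInt_sq_pos.
  - apply Energy_ge_damping.
  - now apply Wirtinger_mean_zero.
Qed.

Lemma Wirtinger_eq_of_SEE_max :
  SEE T ma a1 w = SEE_max T a1 ->
  (PI / T) ^ 2 * RInt (fun t => dev T w t ^ 2) 0 T = RInt (fun t => w t ^ 2) 0 T.
Proof.
  intros Heq. unfold SEE in Heq. rewrite SpVar_dev in Heq.
  apply Wirtinger_eq_of_efficiency_max with a1 (Energy T ma a1 0 w); auto.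
  - apply RInt_sq_pos.
  - apply Energy_ge_damping.
  - now apply Wirtinger_mean_zero.
Qed.

End Efficiency.

Definition clamp (T t : R) : R := Rmax 0 (Rmin T t).

Lemma clamp_id (T t : R) : 0 <= t <= T -> clamp T t = t.
Proof. intros Ht. unfold clamp. rewrite Rmin_right, Rmax_right; lra. Qed.

Lemma clamp_in_0T (T t : R) : 0 <= T -> I0T T (clamp T t).
Proof.
  intros HT. unfold I0T, clamp. split; [apply Rmax_l|].
  apply Rmax_lub; [lra | apply Rmin_l].
Qed.

Lemma Rabs_clamp_le (T s t : R) : Rabs (clamp T s - clamp T t) <= Rabs (s - t).
Proof.
  unfold clamp, Rmax, Rmin.
  destruct (Rle_dec T s), (Rle_dec T t);
  repeat match goal with |- context [Rle_dec ?x ?y] => destruct (Rle_dec x y) end;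
  unfold Rabs; repeat match goal with |- context [Rcase_abs ?x] => destruct (Rcase_abs x) end;
  lra.
Qed.

Lemma continuous_clamp_ext (T : R) (v : R -> R) :
  0 <= T -> cont_on_0T T v -> forall t, continuous (fun t => v (clamp T t)) t.
Proof.
  intros HT Hv t P HP.
  destruct (Hv (clamp T t) (clamp_in_0T T t HT) P HP) as [eps He].
  exists eps. intros s Hs. apply He; [|apply clamp_in_0T; auto].
  change (Rabs (clamp T s - clamp T t) < eps).
  change (Rabs (s - t) < eps) in Hs.
  eapply Rle_lt_trans; [apply Rabs_clamp_le | exact Hs].
Qed.

Section AgreeOn0T.

Variables (T : R) (v w : R -> R).
Hypothesis HT : 0 <= T.
Hypothesis Hvw : forall t, 0 <= t <= T -> v t = w t.

Lemma pos_ext_0T (t : R) : 0 <= t <= T -> Defs.pos v t = Defs.pos w t.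
Proof. intros Ht. apply RInt_ext_le; [lra | intros; apply Hvw; lra]. Qed.

Lemma SpVar_ext_0T : SpVar T v = SpVar T w.
Proof.
  unfold SpVar. rewrite (RInt_ext_le (Defs.pos v) (Defs.pos w)) by (auto; apply pos_ext_0T).
  f_equal. apply RInt_ext_le; auto. intros t Ht. now rewrite pos_ext_0T.
Qed.

Lemma SEE_ext_0T (ma a1 : R) : SEE T ma a1 v = SEE T ma a1 w.
Proof.
  unfold SEE, Energy. rewrite SpVar_ext_0T, Hvw by lra.
  do 2 f_equal. apply RInt_ext_le; auto. intros t Ht. now rewrite Hvw.
Qed.

End AgreeOn0T.

Section Admissible.

Variables (T L Vmax ma a1 : R) (v : R -> R).
Hypothesis HT : 0 < T.
Hypothesis Hv : admissible T L Vmax v.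

Let w := fun t => v (clamp T t).

Let w_continuous : forall t, continuous w t.
Proof. apply continuous_clamp_ext; [lra | apply Hv]. Qed.

Let w_agrees : forall t, 0 <= t <= T -> w t = v t.
Proof. intros t Ht. unfold w. now rewrite clamp_id. Qed.

Let w_nonzero : exists t0, 0 <= t0 <= T /\ w t0 <> 0.
Proof.
  destruct Hv as [_ [_ [_ [_ [t0 [Ht0 Hvt0]]]]]].
  exists t0. split; auto. now rewrite w_agrees.
Qed.

Lemma SEE_le_max_of_admissible : 0 <= ma -> 0 < a1 -> SEE T ma a1 v <= SEE_max T a1.
Proof.
  intros Hma Ha1. rewrite <- (SEE_ext_0T T w v) by (auto; lra).
  exact (SEE_le_max_of_continuous T ma a1 w HT Hma Ha1 w_continuous w_nonzero).
Qed.

Lemma sin_profile_of_SEE_max :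
  0 <= ma -> 0 < a1 -> SEE T ma a1 v = SEE_max T a1 ->
  exists k, forall t, 0 <= t <= T -> v t = k * sin (PI / T * t).
Proof.
  intros Hma Ha1 Heq. rewrite <- (SEE_ext_0T T w v) in Heq by (auto; lra).
  destruct (Wirtinger_mean_zero_eq_sin T w HT w_continuous) as [k Hk].
  - exact (Wirtinger_eq_of_SEE_max T ma a1 w HT Hma Ha1 w_continuous w_nonzero Heq).
  - exists k. intros t Ht. rewrite <- w_agrees by auto. now apply Hk.
Qed.

Lemma sin_profile_amplitude_le (k : R) :
  (forall t, 0 <= t <= T -> v t = k * sin (PI / T * t)) ->
  0 <= k <= Rmin Vmax (PI * L / (2 * T)).
Proof.
  intros Hk. destruct Hv as [_ [_ [Hbound [Hint _]]]].
  assert (HPI := PI_RGT_0).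
  assert (Hmid : v (T / 2) = k).
  { rewrite Hk, sin_PI_div_half by lra. ring. }
  assert (Hk0 := Hbound (T / 2) ltac:(unfold I0T; lra)). rewrite Hmid in Hk0.
  rewrite (RInt_sin_profile T k v HT Hk) in Hint.
  split; [lra|]. apply Rmin_glb; [lra|].
  apply Rle_div_r; [lra|]. apply Rle_div_l in Hint; [|lra]. lra.
Qed.

End Admissible.

Lemma vstar_sin_profile (T L Vmax t : R) :
  0 < T -> vstar T L Vmax t = Rmin Vmax (PI * L / (2 * T)) * sin (PI / T * t).
Proof. intros HT. unfold vstar. do 2 f_equal. field. lra. Qed.

Lemma cont_on_0T_of_continuous (T : R) (v : R -> R) :
  (forall t, continuous v t) -> cont_on_0T T v.
Proof.
  intros Hv t _ P HP. destruct (Hv t P HP) as [eps He].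
  exists eps. intros s Hs _. now apply He.
Qed.

Lemma vstar_amplitude_pos (T L Vmax : R) :
  0 < T -> 0 < L -> 0 < Vmax -> 0 < Rmin Vmax (PI * L / (2 * T)).
Proof.
  intros HT HL HV. apply Rmin_glb_lt; [lra|].
  apply Rdiv_lt_0_compat; [apply Rmult_lt_0_compat; [apply PI_RGT_0|] |]; lra.
Qed.

Lemma admissible_vstar (T L Vmax : R) :
  0 < T -> 0 < L -> 0 < Vmax -> admissible T L Vmax (vstar T L Vmax).
Proof.
  intros HT HL HV. assert (HPI := PI_RGT_0).
  set (c := Rmin Vmax (PI * L / (2 * T))).
  assert (Hc : 0 < c <= Vmax /\ c <= PI * L / (2 * T))
    by (unfold c; repeat split; [now apply vstar_amplitude_pos | apply Rmin_l | apply Rmin_r]).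
  assert (Hstar : forall t, vstar T L Vmax t = c * sin (PI / T * t))
    by (intros; now apply vstar_sin_profile).
  split; [|split; [|split; [|split]]].
  - apply cont_on_0T_of_continuous. intros t.
    apply (continuous_ext (fun t => c * sin (PI / T * t))); [intros; now rewrite Hstar|].
    continuity_R.
  - rewrite Hstar, Rmult_0_r, sin_0. ring.
  - intros t Ht. rewrite Hstar.
    destruct (sin_PI_div_bounds T t HT Ht). split; nra.
  - rewrite (RInt_sin_profile T c) by auto.
    replace L with (2 * (PI * L / (2 * T)) * T / PI) by (field; split; lra).
    unfold Rdiv at 1 3. apply Rmult_le_compat_r; [left; apply Rinv_0_lt_compat; lra|].
    apply Rmult_le_compat_r; lra.
  - exists (T / 2). split; [unfold I0T; lra|].
    rewrite Hstar, sin_PI_div_half by lra. lra.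
Qed.

Theorem mainTheorem2 (T L Vmax ma a1 : R) :
  0 < T -> 0 < L -> 0 < Vmax -> 0 < ma -> 0 < a1 ->
  admissible T L Vmax (vstar T L Vmax) /\
  (forall v, admissible T L Vmax v ->
     SEE T ma a1 v <= SEE T ma a1 (vstar T L Vmax)) /\
  (forall v, admissible T L Vmax v ->
     SEE T ma a1 v = SEE T ma a1 (vstar T L Vmax) ->
     SpVar T v <= SpVar T (vstar T L Vmax)).
Proof.
  intros HT HL HV Hma Ha1.
  set (c := Rmin Vmax (PI * L / (2 * T))).
  assert (Hstar : forall t, 0 <= t <= T -> vstar T L Vmax t = c * sin (PI / T * t))
    by (intros; now apply vstar_sin_profile).
  assert (Hadm := admissible_vstar T L Vmax HT HL HV).
  assert (HSEE : SEE T ma a1 (vstar T L Vmax) = SEE_max T a1)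
    by (apply (SEE_sin_profile T c); auto; apply Rgt_not_eq, vstar_amplitude_pos; auto).
  rewrite HSEE. split; [|split]; auto.
  - intros v Hv. apply SEE_le_max_of_admissible with L Vmax; auto; lra.
  - intros v Hv Heq.
    destruct (sin_profile_of_SEE_max T L Vmax ma a1 v HT Hv) as [k Hk]; auto; [lra|].
    assert (Hk' := sin_profile_amplitude_le T L Vmax v HT Hv k Hk).
    rewrite (SpVar_sin_profile T k v HT Hk), (SpVar_sin_profile T c _ HT Hstar).
    assert (HPI := PI_RGT_0). fold c in Hk'.
    unfold Rdiv. apply Rmult_le_compat_r; [left; apply Rinv_0_lt_compat; nra|].
    apply Rmult_le_compat_r; [nra|]. apply pow_incr; lra.
Qed.
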